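(* Let $d>0$ and let $I\subseteq\mathbb{R}$ be a nonempty, non-singleton interval with $\ell(I)\geq d$. (1) Let $g: I\to\mathbb{R}$ be increasing and $k: I\to\mathbb{R}$ bounded, such that $\mathscr{H}_{x_d}(g)\geq\mathscr{H}(k)$ for every $x\in I$. Then both $g+k$ and $g-k$ are $d$-periodically increasing. (2) Conversely, suppose $\ell(I)>2d$ and let $f: I\to\mathbb{R}$ be $d$-periodically increasing such that there is $l>0$ with $f(x+nd)-f(x+(n-1)d)=l$ for all $x\in I$ and $n\in\mathbb{N}$ with $x+(n-1)d,\ x+nd\in I$. Then $f=g+h$ where $g: I\to\mathbb{R}$ is increasing and $h: I\to\mathbb{R}$ is periodic with period $d$, i.e. $h(x+d)=h(x)$ whenever $x,x+d\in I$.
   Context: $\ell(I)$ denotes the length of $I$. A function $f: I\to\mathbb{R}$ is $d$-periodically increasing if $f(x)\leq f(y)$ for all $x,y\in I$ with $y-x\geq d$. For $x\in I$ and $I_d=[x,x+d]\cap I$, the extended height is $\mathscr{H}_{x_d}(f)=\sup_{u,v\in I_d}|f(u)-f(v)|$, and the height is $\mathscr{H}(f)=\sup_{u,v\in I}|f(u)-f(v)|$. *)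

From Stdlib Require Import Reals.
From Coquelicot Require Import Coquelicot.
Open Scope R_scope.

Definition is_interval (I : R -> Prop) : Prop :=
  forall x y z, I x -> I z -> x <= y -> y <= z -> I y.

Definition nondegenerate (I : R -> Prop) : Prop :=
  exists x y, I x /\ I y /\ x <> y.

Definition len (I : R -> Prop) : Rbar :=
  Lub_Rbar (fun r => exists x y, I x /\ I y /\ r = y - x).

Definition increasing_on (I : R -> Prop) (g : R -> R) : Prop :=
  forall x y, I x -> I y -> x <= y -> g x <= g y.

Definition bounded_on (I : R -> Prop) (k : R -> R) : Prop :=
  exists M, forall x, I x -> Rabs (k x) <= M.

Definition d_per_increasing (d : R) (I : R -> Prop) (f : R -> R) : Prop :=
  forall x y, I x -> I y -> y - x >= d -> f x <= f y.

Definition Id (I : R -> Prop) (x d : R) : R -> Prop :=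
  fun u => x <= u <= x + d /\ I u.

Definition height (J : R -> Prop) (f : R -> R) : Rbar :=
  Lub_Rbar (fun r => exists u v, J u /\ J v /\ r = Rabs (f u - f v)).

Definition ext_height (I : R -> Prop) (d x : R) (f : R -> R) : Rbar :=
  height (Id I x d) f.

(* Part (1): if y - x >= d then [x, x + d] lies in I between x and y, so
   |k x - k y| <= H(k) <= H_{x_d}(g) = g (x + d) - g x <= g y - g x, and
   this increment bound is exactly what makes g + k and g - k
   d-periodically increasing.
   Part (2): only the case n = 1 of the step hypothesis is needed.  It says
   f (x + d) - f x = l, so h := f - (l / d) id is d-periodic and
   g := (l / d) id is increasing because l > 0. *)

From Stdlib Require Import Reals Lra.
From Coquelicot Require Import Coquelicot.
Open Scope R_scope.

Lemma height_ge (J : R -> Prop) (f : R -> R) u v :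
  J u -> J v -> Rbar_le (Finite (Rabs (f u - f v))) (height J f).
Proof.
  intros Ju Jv. unfold height.
  destruct (Lub_Rbar_correct
              (fun r => exists u v, J u /\ J v /\ r = Rabs (f u - f v))) as [Hub _].
  apply Hub. exists u, v. auto.
Qed.

Lemma height_le (J : R -> Prop) (f : R -> R) (M : R) :
  (forall u v, J u -> J v -> Rabs (f u - f v) <= M) ->
  Rbar_le (height J f) (Finite M).
Proof.
  intros HM. unfold height.
  destruct (Lub_Rbar_correct
              (fun r => exists u v, J u /\ J v /\ r = Rabs (f u - f v))) as [_ Hlub].
  apply Hlub. intros r (u & v & Ju & Jv & ->). exact (HM u v Ju Jv).
Qed.

Lemma ext_height_increasing_le (I : R -> Prop) (g : R -> R) d x :
  increasing_on I g -> I x -> I (x + d) ->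
  Rbar_le (ext_height I d x g) (Finite (g (x + d) - g x)).
Proof.
  intros Hg Ix Ixd. apply height_le.
  intros u v [Hu Iu] [Hv Iv].
  assert (g x <= g u) by (apply Hg; auto; lra).
  assert (g u <= g (x + d)) by (apply Hg; auto; lra).
  assert (g x <= g v) by (apply Hg; auto; lra).
  assert (g v <= g (x + d)) by (apply Hg; auto; lra).
  apply Rabs_le; lra.
Qed.

Lemma increment_dominates (d : R) (I : R -> Prop) (g k : R -> R) x y :
  0 < d -> is_interval I -> increasing_on I g ->
  (forall x, I x -> Rbar_le (height I k) (ext_height I d x g)) ->
  I x -> I y -> y - x >= d -> Rabs (k x - k y) <= g y - g x.
Proof.
  intros Hd HI Hg Hh Ix Iy Hxy.
  assert (Ixd : I (x + d)) by (apply (HI x (x + d) y); auto; lra).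
  pose proof (Rbar_le_trans _ _ _ (height_ge I k x y Ix Iy)
                (Rbar_le_trans _ _ _ (Hh x Ix)
                   (ext_height_increasing_le I g d x Hg Ix Ixd))) as Hk.
  simpl in Hk.
  assert (g (x + d) <= g y) by (apply Hg; auto; lra).
  lra.
Qed.

Lemma d_per_increasing_add_sub (d : R) (I : R -> Prop) (g k : R -> R) :
  (forall x y, I x -> I y -> y - x >= d -> Rabs (k x - k y) <= g y - g x) ->
  d_per_increasing d I (fun x => g x + k x) /\
  d_per_increasing d I (fun x => g x - k x).
Proof.
  intros Hgk. split; intros x y Ix Iy Hxy;
    pose proof (Hgk x y Ix Iy Hxy) as H; apply Rabs_le_between in H; lra.
Qed.

Lemma linear_increasing (I : R -> Prop) (a : R) :
  0 <= a -> increasing_on I (fun x => a * x).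
Proof. intros Ha x y _ _ Hxy. apply Rmult_le_compat_l; lra. Qed.

Lemma periodic_sub_linear (d l : R) (I : R -> Prop) (f : R -> R) :
  0 < d -> (forall x, I x -> I (x + d) -> f (x + d) - f x = l) ->
  forall x, I x -> I (x + d) ->
    f (x + d) - l / d * (x + d) = f x - l / d * x.
Proof.
  intros Hd Hf x Ix Ixd.
  replace (l / d * (x + d)) with (l / d * x + l) by (field; lra).
  specialize (Hf x Ix Ixd). lra.
Qed.

Theorem theorem3p1 (d : R) (I : R -> Prop) :
  0 < d -> is_interval I -> nondegenerate I -> Rbar_le (Finite d) (len I) ->
  (forall g k : R -> R,
     increasing_on I g -> bounded_on I k ->
     (forall x, I x -> Rbar_le (height I k) (ext_height I d x g)) ->
     d_per_increasing d I (fun x => g x + k x) /\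
     d_per_increasing d I (fun x => g x - k x)) /\
  (Rbar_lt (Finite (2 * d)) (len I) ->
   forall f : R -> R, d_per_increasing d I f ->
   (exists l, 0 < l /\
      forall x (n : nat), I x -> I (x + INR n * d) -> I (x + (INR n - 1) * d) ->
        f (x + INR n * d) - f (x + (INR n - 1) * d) = l) ->
   exists g h : R -> R,
     increasing_on I g /\
     (forall x, I x -> I (x + d) -> h (x + d) = h x) /\
     (forall x, I x -> f x = g x + h x)).
Proof.
  intros Hd HI _ _. split.
  - intros g k Hg _ Hh.
    apply d_per_increasing_add_sub.
    intros x y. exact (increment_dominates d I g k x y Hd HI Hg Hh).
  - intros _ f _ (l & Hl & Hf).
    assert (Hstep : forall x, I x -> I (x + d) -> f (x + d) - f x = l).
    { intros x Ix Ixd. pose proof (Hf x 1%nat Ix) as H. simpl INR in H.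
      rewrite Rmult_1_l, Rminus_diag, Rmult_0_l, Rplus_0_r in H. auto. }
    exists (fun x => l / d * x), (fun x => f x - l / d * x).
    split; [| split].
    + apply linear_increasing. apply Rlt_le, Rdiv_lt_0_compat; assumption.
    + exact (periodic_sub_linear d l I f Hd Hstep).
    + intros x _. ring.
Qed.
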